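(* There exist constants $C>0$ and $n_0$ such that for every $n\ge n_0$ and every assignment $x:V\to\{-1,1\}$, we have $F_4\ge F_2^2-\frac{C}{n}$, where $F_2=\mathbb E_{(\mathbf v_1,\mathbf v_2)\sim\mathcal D_2}[x_{\mathbf v_1}x_{\mathbf v_2}]$ and $F_4=\mathbb E_{(\mathbf v_1,\dots,\mathbf v_4)\sim\mathcal D_4}[x_{\mathbf v_1}x_{\mathbf v_2}x_{\mathbf v_3}x_{\mathbf v_4}]$.
   Context: Let $\mathbf e_1,\dots,\mathbf e_n$ be the standard basis of $\mathbb R^n$ and $V=\{\frac{1}{\sqrt3}(b_1\mathbf e_i+b_2\mathbf e_j+b_3\mathbf e_k): b_1,b_2,b_3\in\{-1,1\},\ 1\le i<j<k\le n\}$. For $k<n/2$, $\mathcal D_k$ is the distribution on $V^k$ obtained by sampling $2k+1$ distinct indices $i_1,\dots,i_{2k+1}\in[n]$ uniformly at random, sampling independent uniform signs $b_1,\dots,b_{2k+1}\in\{-1,1\}$, and returning $(\mathbf v_1,\dots,\mathbf v_k)$ with $\mathbf v_j=\frac{1}{\sqrt3}(b_1\mathbf e_{i_1}+b_{2j}\mathbf e_{i_{2j}}+b_{2j+1}\mathbf e_{i_{2j+1}})$. *)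

From HB Require Import structures.
From mathcomp Require Import all_boot all_order all_algebra.
From mathcomp Require Import Rstruct.

Set Implicit Arguments. Unset Strict Implicit. Unset Printing Implicit Defensive.
Import Order.TTheory GRing.Theory Num.Theory.
Local Open Scope ring_scope.

Notation R := Rdefinitions.R.
Definition ebasis (n : nat) (i : 'I_n) : 'rV[R]_n := delta_mx 0 i.

Definition sgnb (b : bool) : R := if b then 1 else -1.

Definition vec3 (n : nat) (i j k : 'I_n) (b1 b2 b3 : bool) : 'rV[R]_n :=
  (Num.sqrt (3 : R))^-1 *: (sgnb b1 *: ebasis i + sgnb b2 *: ebasis j + sgnb b3 *: ebasis k).

Definition inV (n : nat) (v : 'rV[R]_n) : Prop :=
  exists (i j k : 'I_n) (b1 b2 b3 : bool),
    (nat_of_ord i < nat_of_ord j)%N /\ (nat_of_ord j < nat_of_ord k)%N /\ v = vec3 i j k b1 b2 b3.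

(* an assignment x : V -> {-1,1} (values outside V are irrelevant) *)
Definition assignment (n : nat) (x : 'rV[R]_n -> R) : Prop :=
  forall v, inV v -> x v = 1 \/ x v = -1.

(* the sample of D_k determined by the ordered distinct indices I (i_1..i_{2k+1},
   0-based) and signs B; component j (0-based) is
   (1/sqrt3)(b_1 e_{i_1} + b_{2j+2} e_{i_{2j+2}} + b_{2j+3} e_{i_{2j+3}}) in 1-based terms *)
Definition Dsample (n k : nat) (I : {ffun 'I_(k.*2).+1 -> 'I_n})
    (B : {ffun 'I_(k.*2).+1 -> bool}) (j : 'I_k) : 'rV[R]_n :=
  vec3 (I ord0) (I (inord (j.*2).+1)) (I (inord (j.*2).+2))
       (B ord0) (B (inord (j.*2).+1)) (B (inord (j.*2).+2)).

(* expectation over D_k: uniform over injective index tuples and over sign tuples *)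
Definition expD (n k : nat) (f : ('I_k -> 'rV[R]_n) -> R) : R :=
  (\sum_(I : {ffun 'I_(k.*2).+1 -> 'I_n} | injectiveb I)
     \sum_(B : {ffun 'I_(k.*2).+1 -> bool}) f (Dsample I B))
  / (#|[pred I : {ffun 'I_(k.*2).+1 -> 'I_n} | injectiveb I]| * 2 ^ (k.*2).+1)%:R.

Definition Fk (n k : nat) (x : 'rV[R]_n -> R) : R :=
  @expD n k (fun v => \prod_(j < k) x (v j)).

From HB Require Import structures.
From mathcomp Require Import all_boot all_order all_algebra.
From mathcomp Require Import Rstruct.
From mathcomp Require Import zify ring lra.

Set Implicit Arguments. Unset Strict Implicit. Unset Printing Implicit Defensive.
Import Order.TTheory GRing.Theory Num.Theory.
Local Open Scope ring_scope.

(* Let G_k be F_k with the 2k+1 indices drawn independently, a sample with a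
   repeated index counting 0.  Only a fraction O(k^2/n) of index tuples has a
   repetition, so |F_k - G_k| = O(1/n).  Grouping the samples of G_k by their
   shared signed index a gives G_k = E_a[(H a / (2n)^2)^k], where H a sums x
   over all triples through a; hence G_2^2 <= G_4 by Cauchy-Schwarz. *)

Lemma ffact_le_expn n m : (n ^_ m <= n ^ m)%N.
Proof.
elim: m => [|m IH]; first by rewrite ffactn0 expn0.
by rewrite ffactnSr expnS mulnC leq_mul ?leq_subr.
Qed.

Lemma expn_le_ffact_add n m : (n ^ m.+1 <= n ^_ m.+1 + m.+1 ^ 2 * n ^ m)%N.
Proof.
elim: m => [|m IH]; first by rewrite ffactn1 expn0; lia.
have ffactS : (n ^_ m.+1 * n <= n ^_ m.+2 + m.+1 * n ^_ m.+1)%N.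
  by rewrite (ffactnSr n m.+1) (mulnC m.+1) -mulnDr leq_mul2l; lia.
have ffact_le := ffact_le_expn n m.+1.
have IHn := leq_mul IH (leqnn n).
move: ffactS ffact_le IHn; rewrite [(n ^ m.+2)%N]expnSr [(n ^ m.+1)%N]expnSr.
set f1 := (n ^_ m.+1)%N; set f2 := (n ^_ m.+2)%N; set p := (n ^ m)%N.
nia.
Qed.

Section RealBounds.
Variable K : realFieldType.

Lemma sqr_sum_le_card_sum_sqr (T : finType) (a : T -> K) :
  (\sum_i a i) ^+ 2 <= #|T|%:R * \sum_i a i ^+ 2.
Proof.
set S := \sum_i a i; set Q := \sum_i a i ^+ 2.
have sum_sqr_diff i : \sum_j (a i - a j) ^+ 2 = #|T|%:R * a i ^+ 2 - 2 * a i * S + Q.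
  transitivity (\sum_j (a i ^+ 2 - 2 * a i * a j + a j ^+ 2)).
    by apply: eq_bigr => j _; ring.
  by rewrite big_split /= sumrB sumr_const -mulr_sumr -/Q -/S (mulr_natl (a i ^+ 2)).
have : 0 <= \sum_i \sum_j (a i - a j) ^+ 2.
  by apply: sumr_ge0 => i _; apply: sumr_ge0 => j _; exact: sqr_ge0.
rewrite (eq_bigr _ (fun i _ => sum_sqr_diff i)) big_split /= sumrB -mulr_sumr.
rewrite -/Q -mulr_suml -mulr_sumr -/S sumr_const -mulr_natl.
nra.
Qed.

Lemma dist_ratio_le (a b M N : K) : 0 < M -> M <= N ->
  `|a| <= M -> `|b| <= N - M -> `|a / M - (a + b) / N| <= 2 * (N - M) / N.
Proof.
move=> M_gt0 MN a_le b_le.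
have N_gt0 : 0 < N by apply: lt_le_trans MN.
have -> : a / M - (a + b) / N = (a * (N - M) - b * M) / (M * N).
  by field; rewrite !gt_eqF.
rewrite normrM (gtr0_norm (_ : 0 < (M * N)^-1)) ?invr_gt0 ?mulr_gt0 //.
rewrite ler_pdivrMr ?mulr_gt0 //.
apply: le_trans (ler_normB _ _) _.
rewrite !normrM (gtr0_norm M_gt0) (ger0_norm (_ : 0 <= N - M)) ?subr_ge0 //.
have -> : 2 * (N - M) / N * (M * N) = 2 * ((N - M) * M).
  by field; rewrite gt_eqF.
have := ler_wpM2r (_ : 0 <= N - M) a_le; rewrite subr_ge0 => /(_ MN) ?.
have := ler_wpM2r (ltW M_gt0) b_le.
lra.
Qed.

Lemma normr_sum2_le_card (T1 T2 : finType) (P : pred T1) (F : T1 -> T2 -> K) :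
  (forall a b, `|F a b| <= 1) -> `|\sum_(a | P a) \sum_b F a b| <= (#|P| * #|T2|)%:R.
Proof.
move=> F_le1; apply: le_trans (ler_norm_sum _ _ _) _.
apply: le_trans (@ler_sum _ _ _ _ _ (fun _ => #|T2|%:R) _) _.
  move=> a _; apply: le_trans (ler_norm_sum _ _ _) _.
  apply: le_trans (@ler_sum _ _ _ _ _ (fun _ => 1) _) _; first by move=> b _; exact: F_le1.
  by rewrite sumr_const.
by rewrite sumr_const natrM mulr_natl.
Qed.

End RealBounds.

Lemma vec3_swap12 n (i j k : 'I_n) b1 b2 b3 : vec3 i j k b1 b2 b3 = vec3 j i k b2 b1 b3.
Proof. by rewrite /vec3 (addrC (sgnb b1 *: _)). Qed.

Lemma vec3_swap23 n (i j k : 'I_n) b1 b2 b3 : vec3 i j k b1 b2 b3 = vec3 i k j b1 b3 b2.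
Proof. by rewrite /vec3 -!addrA (addrC (sgnb b2 *: _)). Qed.

Lemma inV_vec3 n (i j k : 'I_n) b1 b2 b3 :
  i != j -> i != k -> j != k -> inV (vec3 i j k b1 b2 b3).
Proof.
have sorted_inV (i' j' k' : 'I_n) c1 c2 c3 :
    (i' < j')%N -> (j' < k')%N -> inV (vec3 i' j' k' c1 c2 c3).
  by move=> ij jk; exists i', j', k', c1, c2, c3.
rewrite -!val_eqE /= => /eqP ij /eqP ik /eqP jk.
case: (ltngtP i j) => ?; case: (ltngtP j k) => ?; case: (ltngtP i k) => ?; try lia.
- exact: sorted_inV.
- by rewrite vec3_swap23; apply: sorted_inV.
- by rewrite vec3_swap23 vec3_swap12; apply: sorted_inV.
- by rewrite vec3_swap12; apply: sorted_inV.
- by rewrite vec3_swap12 vec3_swap23; apply: sorted_inV.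
- by rewrite vec3_swap12 vec3_swap23 vec3_swap12; apply: sorted_inV.
Qed.

Section Indices.
Variable k : nat.

Definition odd_idx (j : 'I_k) : 'I_(k.*2).+1 := inord (j.*2).+1.
Definition even_idx (j : 'I_k) : 'I_(k.*2).+1 := inord (j.*2).+2.

Lemma odd_idxE j : odd_idx j = (j.*2).+1 :> nat.
Proof. by rewrite inordK //; have := ltn_ord j; lia. Qed.

Lemma even_idxE j : even_idx j = (j.*2).+2 :> nat.
Proof. by rewrite inordK //; have := ltn_ord j; lia. Qed.

Lemma idx_cases (i : 'I_(k.*2).+1) :
  i = ord0 \/ exists j : 'I_k, i = odd_idx j \/ i = even_idx j.
Proof.
have [i0|i_gt0] := posnP i; [left; exact: ord_inj | right].
have j_lt : ((i.-1) %/ 2 < k)%N by have := ltn_ord i; lia.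
exists (Ordinal j_lt).
by case: (eqVneq (i.-1 %% 2)%N 0%N) => ?; [left|right];
  apply: ord_inj; rewrite ?odd_idxE ?even_idxE /=; lia.
Qed.

End Indices.

Section Samples.
Variables (n : nat) (x : 'rV[R]_n -> R).

Definition xtriple (a b c : 'I_n * bool) : R :=
  if [&& a.1 != b.1, a.1 != c.1 & b.1 != c.1]
  then x (vec3 a.1 b.1 c.1 a.2 b.2 c.2) else 0.

Definition star_sum (a : 'I_n * bool) : R :=
  \sum_(p : ('I_n * bool) * ('I_n * bool)) xtriple a p.1 p.2.

Definition sample_prod k (I : {ffun 'I_(k.*2).+1 -> 'I_n})
    (B : {ffun 'I_(k.*2).+1 -> bool}) : R :=
  \prod_(j < k) xtriple (I ord0, B ord0) (I (odd_idx j), B (odd_idx j))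
                        (I (even_idx j), B (even_idx j)).

Lemma prod_Dsample k (I : {ffun 'I_(k.*2).+1 -> 'I_n}) (B : {ffun 'I_(k.*2).+1 -> bool}) :
  injectiveb I ->
  \prod_(j < k) x (@Dsample n k I B j) = sample_prod I B.
Proof.
move=> /injectiveP I_inj; apply: eq_bigr => j _.
have I_neq (a b : 'I_(k.*2).+1) : (a : nat) <> b -> I a != I b.
  by move=> ab; apply: contraPneq ab => /I_inj ->.
by rewrite /xtriple /= !I_neq ?odd_idxE ?even_idxE.
Qed.

Definition split_sample k
    (p : {ffun 'I_(k.*2).+1 -> 'I_n} * {ffun 'I_(k.*2).+1 -> bool}) :
    ('I_n * bool) * {ffun 'I_k -> ('I_n * bool) * ('I_n * bool)} :=
  ((p.1 ord0, p.2 ord0),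
   [ffun j => ((p.1 (odd_idx j), p.2 (odd_idx j)), (p.1 (even_idx j), p.2 (even_idx j)))]).

Lemma split_sample_inj k : injective (@split_sample k).
Proof.
move=> [I B] [I' B'] [eq0 eq0' eq_ff].
have eq_j j := congr1 (fun f : {ffun 'I_k -> _} => f j) eq_ff.
have eqIB i : I i = I' i /\ B i = B' i.
  case: (idx_cases i) => [->|[j [->|->]]] //.
  - by have := eq_j j; rewrite !ffunE => -[-> -> _ _].
  - by have := eq_j j; rewrite !ffunE => -[_ _ -> ->].
by congr pair; apply/ffunP => i; case: (eqIB i).
Qed.

Lemma split_sample_bij k : bijective (@split_sample k).
Proof.
apply: inj_card_bij; first exact: split_sample_inj.
rewrite !card_prod !card_ffun !card_prod !card_ord card_bool.
by rewrite -expnMn expnS -mul2n expnM mulnn.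
Qed.

Lemma sum_sample_prod k :
  \sum_(I : {ffun 'I_(k.*2).+1 -> 'I_n}) \sum_(B : {ffun 'I_(k.*2).+1 -> bool})
    sample_prod I B = \sum_(a : 'I_n * bool) star_sum a ^+ k.
Proof.
pose G (y : ('I_n * bool) * {ffun 'I_k -> ('I_n * bool) * ('I_n * bool)}) :=
  \prod_(j < k) xtriple y.1 (y.2 j).1 (y.2 j).2.
transitivity (\sum_y G y).
  rewrite [RHS](reindex (@split_sample k)) /=; last exact/onW_bij/split_sample_bij.
  by rewrite pair_bigA; apply: eq_bigr => p _; apply: eq_bigr => j _; rewrite ffunE.
transitivity (\sum_a \sum_b G (a, b)); first by rewrite pair_bigA; apply: eq_bigr => -[].
apply: eq_bigr => a _.
by rewrite /G -(bigA_distr_bigA (fun j p => xtriple a p.1 p.2)) prodr_const card_ord.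
Qed.

Definition Gk k : R :=
  (\sum_(I : {ffun 'I_(k.*2).+1 -> 'I_n}) \sum_(B : {ffun 'I_(k.*2).+1 -> bool})
     sample_prod I B) / (n ^ (k.*2).+1 * 2 ^ (k.*2).+1)%:R.

Lemma Gk_sqr_le_Gk4 : (0 < n)%N -> Gk 2 ^+ 2 <= Gk 4.
Proof.
move=> n_gt0; rewrite /Gk !sum_sample_prod -!expnMn /= !natrX.
have := sqr_sum_le_card_sum_sqr (fun a : 'I_n * bool => star_sum a ^+ 2).
rewrite card_prod card_ord card_bool.
set N := (n * 2)%N; have N_gt0 : 0 < N%:R :> R by rewrite ltr0n muln_gt0 n_gt0.
under [X in _ <= _ * X -> _]eq_bigr do rewrite -exprM.
move=> cs; rewrite expr_div_n -exprM ler_pdivrMr ?exprn_gt0 //.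
apply: le_trans cs _; rewrite mulrC.
by rewrite [X in _ <= X](_ : _ = (\sum_a star_sum a ^+ 4) * N%:R) //; field; rewrite gt_eqF.
Qed.

Lemma card_injective_ffun m :
  #|[pred I : {ffun 'I_m -> 'I_n} | injectiveb I]| = (n ^_ m)%N.
Proof.
transitivity #|[set I : {ffun 'I_m -> 'I_n} | injectiveb I]|.
  by apply: eq_card => I; rewrite inE.
by rewrite card_inj_ffuns !card_ord.
Qed.

Lemma FkE k : Fk k x =
  (\sum_(I : {ffun 'I_(k.*2).+1 -> 'I_n} | injectiveb I) \sum_B sample_prod I B)
  / (n ^_ (k.*2).+1 * 2 ^ (k.*2).+1)%:R.
Proof.
rewrite /Fk /expD card_injective_ffun; congr (_ / _).
by apply: eq_bigr => I I_inj; apply: eq_bigr => B _; apply: prod_Dsample.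
Qed.

Hypothesis x_assign : assignment x.

Lemma xtriple_bound a b c : `|xtriple a b c| <= 1.
Proof.
rewrite /xtriple; case: ifP => [/and3P [ab ac bc]|_]; last by rewrite normr0.
by case: (x_assign (inV_vec3 a.2 b.2 c.2 ab ac bc)) => ->; rewrite ?normrN normr1.
Qed.

Lemma sample_prod_bound k I B : `|@sample_prod k I B| <= 1.
Proof.
by rewrite normr_prod prodr_ile1 // => j _; rewrite normr_ge0 xtriple_bound.
Qed.

Lemma normr_sum_sample_prod_le k (P : pred {ffun 'I_(k.*2).+1 -> 'I_n}) :
  `|\sum_(I | P I) \sum_B sample_prod I B| <= (#|P| * 2 ^ (k.*2).+1)%:R.
Proof.
have := normr_sum2_le_card P (@sample_prod_bound k).
by rewrite card_ffun card_bool card_ord.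
Qed.

Lemma Fk_bound k : ((k.*2).+1 <= n)%N -> `|Fk k x| <= 1.
Proof.
move=> m_le_n; rewrite FkE normrM normfV normr_nat ler_pdivrMr ?mul1r.
  have := normr_sum_sample_prod_le [pred I : {ffun 'I_(k.*2).+1 -> 'I_n} | injectiveb I].
  by rewrite card_injective_ffun.
by rewrite ltr0n muln_gt0 ffact_gt0 m_le_n expn_gt0.
Qed.

Lemma Gk_bound k : (0 < n)%N -> `|Gk k| <= 1.
Proof.
move=> n_gt0; rewrite /Gk normrM normfV normr_nat ler_pdivrMr ?mul1r.
  have := normr_sum_sample_prod_le (k := k) predT.
  by rewrite big_mkcond /= cardT -cardE card_ffun !card_ord.
by rewrite ltr0n muln_gt0 !expn_gt0 n_gt0.
Qed.

Lemma Fk_Gk_close k : ((k.*2).+1 <= n)%N ->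
  `|Fk k x - Gk k| <= 2 * ((k.*2).+1 ^ 2)%:R / n%:R.
Proof.
move=> m_le_n; set m := (k.*2).+1 in m_le_n *.
have n_gt0 : 0 < n%:R :> R by rewrite ltr0n; apply: leq_trans m_le_n.
set M := (n ^_ m * 2 ^ m)%:R : R; set N := (n ^ m * 2 ^ m)%:R : R.
have M_gt0 : 0 < M by rewrite ltr0n muln_gt0 ffact_gt0 m_le_n expn_gt0.
have M_le_N : M <= N by rewrite ler_nat leq_mul2r ffact_le_expn orbT.
have Sinj_le := normr_sum_sample_prod_le [pred I : {ffun 'I_m -> 'I_n} | injectiveb I].
rewrite card_injective_ffun -/M in Sinj_le.
have Snon_le := normr_sum_sample_prod_le [pred I : {ffun 'I_m -> 'I_n} | ~~ injectiveb I].
have card_non : #|[pred I : {ffun 'I_m -> 'I_n} | ~~ injectiveb I]| = (n ^ m - n ^_ m)%N.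
  have := cardC [pred I : {ffun 'I_m -> 'I_n} | injectiveb I].
  rewrite card_injective_ffun card_ffun !card_ord => <-.
  by rewrite addKn; apply: eq_card.
rewrite card_non mulnBl natrB ?leq_mul2r ?ffact_le_expn ?orbT // -/M -/N in Snon_le.
rewrite FkE /Gk -/M -/N [X in _ - X / N](bigID (fun I : {ffun 'I_m -> 'I_n} => injectiveb I)) /=.
apply: le_trans (dist_ratio_le M_gt0 M_le_N Sinj_le Snon_le) _.
rewrite -!mulrA ler_pM2l // ler_pdivrMr ?(lt_le_trans M_gt0) // mulrAC.
rewrite ler_pdivlMr // -natrB ?leq_mul2r ?ffact_le_expn ?orbT // -!natrM ler_nat.
rewrite -mulnBl mulnAC mulnA leq_mul2r mulnBl leq_subLR.
have := leq_mul (expn_le_ffact_add n k.*2) (leqnn n).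
by rewrite mulnDl -mulnA -[(n ^ k.*2 * n)%N]expnSr => ->; rewrite orbT.
Qed.

End Samples.

Theorem mainTheorem8 :
  exists (C : R) (n0 : nat), 0 < C /\
    forall (n : nat) (x : 'rV[R]_n -> R), (n0 <= n)%N -> assignment x ->
      @Fk n 4 x >= (@Fk n 2 x) ^+ 2 - C / n%:R.
Proof.
exists 262, 9%N; split=> // n x n_ge9 x_assign.
have n_gt0 : (0 < n)%N by apply: leq_trans n_ge9.
have n_ge5 : (5 <= n)%N by apply: leq_trans n_ge9.
have close4 := Fk_Gk_close x_assign (k := 4) n_ge9.
have close2 := Fk_Gk_close x_assign (k := 2) n_ge5.
have F2_le := Fk_bound x_assign (k := 2) n_ge5.
have G2_le := Gk_bound x_assign 2 n_gt0.
have G_sqr := Gk_sqr_le_Gk4 x n_gt0.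
have inv_gt0 : 0 < n%:R^-1 :> R by rewrite invr_gt0 ltr0n.
move: close4 close2 F2_le G2_le G_sqr inv_gt0.
rewrite (_ : (4.*2.+1 ^ 2)%N = 81%N) // (_ : (2.*2.+1 ^ 2)%N = 25%N) //.
set v := n%:R^-1; set F4 := Fk 4 x; set F2 := Fk 2 x; set G4 := Gk x 4; set G2 := Gk x 2.
move=> /ler_normlP[? ?] /ler_normlP[? ?] /ler_normlP[? ?] /ler_normlP[? ?] ? ?.
(* F4 >= G4 - 162/n >= G2^2 - 162/n, and |G2^2 - F2^2| <= 2 |G2 - F2| <= 100/n. *)
nra.
Qed.
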